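(* The consecutive patterns $\underline{0102}$ and $\underline{0112}$ are reciprocal: for every $n\ge 1$ and all $S,T\subseteq[n]$, $$|\{\epsilon\in I_n:\operatorname{Em}(\underline{0102},\epsilon)=S,\ \operatorname{Em}(\underline{0112},\epsilon)=T\}|=|\{\epsilon\in I_n:\operatorname{Em}(\underline{0102},\epsilon)=T,\ \operatorname{Em}(\underline{0112},\epsilon)=S\}|.$$
   Context: An inversion sequence of length $n$ is an integer sequence $\epsilon=\epsilon_1\cdots\epsilon_n$ with $0\le\epsilon_i<i$ for all $i$; $I_n$ denotes the set of them. The reduction of an integer word is obtained by replacing every occurrence of its $k$-th smallest distinct value by $k-1$. A consecutive pattern $p=\underline{p_1\cdots p_r}$ occurs in a sequence $\epsilon$ at position $i$ if the reduction of $\epsilon_i\epsilon_{i+1}\cdots\epsilon_{i+r-1}$ equals $p_1\cdots p_r$. $\operatorname{Em}(p,\epsilon)$ is the set of all positions $i$ at which $p$ occurs in $\epsilon$, and $[n]=\{1,\dots,n\}$. *)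

From mathcomp Require Import all_boot.
Set Implicit Arguments. Unset Strict Implicit. Unset Printing Implicit Defensive.

Definition reduction (w : seq nat) : seq nat :=
  let vals := sort leq (undup w) in map (fun x => index x vals) w.

(* An inversion sequence of length n: eps_i < i for 1 <= i <= n
   (0-indexed: nth 0 eps j < j.+1). *)
Definition is_inv_seq (n : nat) (eps : seq nat) : bool :=
  (size eps == n) && all (fun j => nth 0 eps j < j.+1) (iota 0 n).

(* The set I_n, as a finite set of n-tuples over 'I_n (all entries are < n). *)
Definition Iseq (n : nat) : {set n.-tuple 'I_n} :=
  [set e : n.-tuple 'I_n | is_inv_seq n (map val e)].

(* The consecutive pattern p occurs in eps at (1-indexed) position i:
   the window eps_i ... eps_{i+r-1} lies inside eps and its reduction is p. *)
Definition occurs_at (p eps : seq nat) (i : nat) : bool :=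
  (1 <= i) && (i + size p - 1 <= size eps) &&
  (reduction (take (size p) (drop i.-1 eps)) == p).

(* Em(p, eps) as a subset of [n]; the element k : 'I_n represents position k+1. *)
Definition Em (n : nat) (p : seq nat) (e : n.-tuple 'I_n) : {set 'I_n} :=
  [set k : 'I_n | occurs_at p (map val e) k.+1].

Definition pat0102 : seq nat := [:: 0; 1; 0; 2].
Definition pat0112 : seq nat := [:: 0; 1; 1; 2].

(* Both patterns occur exactly at the pivots of E, the windows with
   E_k < E_(k+1) >= E_(k+2) and E_(k+1) < E_(k+3): an occurrence of 0102 when
   E_(k+2) = E_k and of 0112 when E_(k+2) = E_(k+1).  Scan E from left to right and at
   each pivot replace E_(k+2) by its image under the cycle E_k -> E_(k+1) -> E'_k -> E_k,
   where E'_k is the already transformed k-th entry.  The new entry stays below E_(k+1),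
   so ascents, descents, pivots and the bound E_i <= i are preserved, while occurrences
   of 0102 and 0112 are exchanged.  Applying the construction again undoes the cycle at
   every pivot, so the map is an involution. *)

From mathcomp Require Import all_boot zify.
Set Implicit Arguments. Unset Strict Implicit.

Section Reduction.
Variable w : seq nat.
Let vals := sort leq (undup w).

Lemma sorted_vals : sorted ltn vals.
Proof.
by rewrite ltn_sorted_uniq_leq sort_uniq undup_uniq sort_sorted //; apply: leq_total.
Qed.

Let mem_vals x : (x \in vals) = (x \in w).
Proof. by rewrite mem_sort mem_undup. Qed.

Lemma index_vals_ltE x y : x \in w -> y \in w -> (index x vals < index y vals) = (x < y).
Proof.
rewrite -!mem_vals => xv yv; apply/idP/idP.
  exact: (sorted_ltn_index ltn_trans sorted_vals).
apply: contraTT; rewrite -!leqNgt.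
exact: (sorted_leq_index leq_trans leqnn (sort_sorted leq_total _)).
Qed.

Lemma index_vals_eqE x y : x \in w -> y \in w -> (index x vals == index y vals) = (x == y).
Proof.
rewrite -!mem_vals => xv yv; apply/eqP/eqP => [|-> //].
by move/(congr1 (nth 0 vals)); rewrite !nth_index.
Qed.
End Reduction.

Lemma sort_undup_pattern a b c d : a < b < d -> c \in [:: a; b] ->
  sort leq (undup [:: a; b; c; d]) = [:: a; b; d].
Proof.
move=> /andP[ab bd] c_ab; apply: (irr_sorted_eq ltn_trans ltnn).
- exact: sorted_vals.
- by rewrite /= ab bd.
- move=> x; rewrite mem_sort mem_undup !inE; move: c_ab; rewrite mem_seq2.
  by case/orP => /eqP->; case: (x == a); case: (x == b).
Qed.

Lemma reduction_0102 a b c d :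
  (reduction [:: a; b; c; d] == pat0102) = [&& a < b, c == a & b < d].
Proof.
set w := [:: a; b; c; d].
have [wa wb wc wd] : [/\ a \in w, b \in w, c \in w & d \in w] by rewrite !inE !eqxx !orbT.
apply/eqP/and3P => [[ia ib ic id] | [ab /eqP c_eq bd]].
- by rewrite -(index_vals_ltE wa wb) -(index_vals_eqE wc wa) -(index_vals_ltE wb wd) ia ib ic id.
- rewrite /reduction /w c_eq sort_undup_pattern ?ab ?mem_head //=.
  by rewrite !eqxx /= (ltn_eqF ab) (ltn_eqF bd) (ltn_eqF (ltn_trans ab bd)).
Qed.

Lemma reduction_0112 a b c d :
  (reduction [:: a; b; c; d] == pat0112) = [&& a < b, c == b & b < d].
Proof.
set w := [:: a; b; c; d].
have [wa wb wc wd] : [/\ a \in w, b \in w, c \in w & d \in w] by rewrite !inE !eqxx !orbT.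
apply/eqP/and3P => [[ia ib ic id] | [ab /eqP c_eq bd]].
- by rewrite -(index_vals_ltE wa wb) -(index_vals_eqE wc wb) -(index_vals_ltE wb wd) ia ib ic id.
- rewrite /reduction /w c_eq sort_undup_pattern ?ab ?mem_seq2 ?eqxx ?orbT //=.
  by rewrite !eqxx /= (ltn_eqF ab) (ltn_eqF bd) (ltn_eqF (ltn_trans ab bd)).
Qed.

Lemma occurs_at_window (p s : seq nat) k : size p = 4 ->
  occurs_at p s k.+1 = (k.+3 < size s) &&
    (reduction [:: nth 0 s k; nth 0 s k.+1; nth 0 s k.+2; nth 0 s k.+3] == p).
Proof.
move=> p4; rewrite /occurs_at p4 /=.
have -> : (k.+1 + 4 - 1 <= size s) = (k.+3 < size s) by lia.
case: ltnP => //= s_k.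
rewrite (drop_nth 0) ?(drop_nth 0 (n := k.+1)) ?(drop_nth 0 (n := k.+2))
  ?(drop_nth 0 (n := k.+3)) /= ?take0 //; lia.
Qed.

(* The 3-cycle x -> y -> x' -> x, a transposition when x = x'. *)
Definition rot3 (x x' y v : nat) : nat :=
  if v == x then y else if v == y then x' else if v == x' then x else v.

Lemma rot3_le x x' y v : x <= y -> x' <= y -> v <= y -> rot3 x x' y v <= y.
Proof. rewrite /rot3; do !case: eqP; lia. Qed.

Lemma rot3_eq_y x x' y v : x < y -> x' < y -> (rot3 x x' y v == y) = (v == x).
Proof. rewrite /rot3; do !case: eqP; lia. Qed.

Lemma rot3_eq_x' x x' y v : x < y -> x' < y -> (rot3 x x' y v == x') = (v == y).
Proof. rewrite /rot3; do !case: eqP; lia. Qed.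

Lemma rot3K x x' y : x < y -> x' < y -> cancel (rot3 x x' y) (rot3 x' x y).
Proof. move=> xy x'y v; rewrite /rot3; do !case: eqP; lia. Qed.

Definition pivot (E : nat -> nat) (k : nat) : bool :=
  [&& E k < E k.+1, E k.+2 <= E k.+1 & E k.+1 < E k.+3].

Definition occ0102 (E : nat -> nat) (k : nat) : bool := pivot E k && (E k.+2 == E k).
Definition occ0112 (E : nat -> nat) (k : nat) : bool := pivot E k && (E k.+2 == E k.+1).

Fixpoint phi (E : nat -> nat) (j : nat) : nat :=
  if j is k.+2 then
    if pivot E k then rot3 (E k) (phi E k) (E k.+1) (E k.+2) else E k.+2
  else E j.
Arguments phi E j : simpl never.

Lemma phiSS E k :
  phi E k.+2 = if pivot E k then rot3 (E k) (phi E k) (E k.+1) (E k.+2) else E k.+2.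
Proof. by []. Qed.

Lemma eq_phi E1 E2 : E1 =1 E2 -> phi E1 =1 phi E2.
Proof.
move=> eqE; elim/ltn_ind => -[|[|k]] IH; try exact: eqE.
by rewrite !phiSS /pivot !eqE IH.
Qed.

Section Phi.
Variable E : nat -> nat.
Notation F := (phi E).

Lemma phi_ascent j : E j < E j.+1 -> F j.+1 = E j.+1.
Proof. by case: j => [|k] // asc; rewrite phiSS /pivot (leqNgt (E k.+2)) asc andbF. Qed.

Lemma phi_pivot_le k : (F k < F k.+1) = (E k < E k.+1) -> pivot E k -> F k.+2 <= E k.+1.
Proof.
move=> ascE pk; have /and3P[asc desc up] := pk.
rewrite asc phi_ascent // in ascE.
by rewrite phiSS pk rot3_le // ltnW.
Qed.

Lemma phi_ltE j : (F j < F j.+1) = (E j < E j.+1).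
Proof.
elim/ltn_ind: j => j IH; case: (ltnP (E j) (E j.+1)) => [asc | desc].
- rewrite phi_ascent //; case: j IH asc => [|[|k]] IH asc //.
  case pk: (pivot E k); last by rewrite phiSS pk.
  have := phi_pivot_le (IH k (ltnW (ltnSn _))) pk.
  by case/and3P: pk => _ _ up; lia.
- apply/negbTE; rewrite -leqNgt; case: j IH desc => [|k] IH desc //.
  case pk: (pivot E k).
  + have := phi_pivot_le (IH k (ltnSn _)) pk.
    by case/and3P: pk => asc _ _; rewrite (phi_ascent asc).
  + rewrite phiSS pk; suff: E k.+1 <= F k.+1 by lia.
    (* the third entry of a pivot window is followed by an ascent *)
    case: k IH desc pk => [|m] IH desc pk //.
    rewrite phiSS; case pm: (pivot E m) => //.
    by case/and3P: pm => _ desc' up; lia.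
Qed.

Lemma pivot_phi k : pivot F k = pivot E k.
Proof.
rewrite /pivot (phi_ltE k) (leqNgt (F k.+2)) (phi_ltE k.+1) -leqNgt.
case asc: (E k < E k.+1); rewrite ?andFb //.
case desc: (E k.+2 <= E k.+1); rewrite ?andFb //=.
rewrite (phi_ascent asc); case: (ltnP (E k.+2) (E k.+3)) => [asc'|desc'].
  by rewrite (phi_ascent asc').
have: F k.+2 <= F k.+1 by rewrite leqNgt phi_ltE -leqNgt.
have: F k.+3 <= F k.+2 by rewrite leqNgt phi_ltE -leqNgt.
by rewrite (phi_ascent asc); lia.
Qed.

Lemma phi_pivot_lt k : pivot E k -> F k < E k.+1.
Proof. by case/and3P => asc _ _; rewrite -(phi_ascent asc) phi_ltE. Qed.

Lemma occ0102_phi k : occ0102 F k = occ0112 E k.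
Proof.
rewrite /occ0102 /occ0112 pivot_phi; case pk: (pivot E k) => //=.
have /and3P[asc _ _] := pk.
by rewrite phiSS pk rot3_eq_x' ?phi_pivot_lt.
Qed.

Lemma occ0112_phi k : occ0112 F k = occ0102 E k.
Proof.
rewrite /occ0102 /occ0112 pivot_phi; case pk: (pivot E k) => //=.
have /and3P[asc _ _] := pk.
by rewrite phiSS pk (phi_ascent asc) rot3_eq_y ?phi_pivot_lt.
Qed.

Lemma phi_le : (forall i, E i <= i) -> forall j, F j <= j.
Proof.
move=> E_le [|[|k]]; try exact: E_le.
case pk: (pivot E k); last by rewrite phiSS pk.
by have := phi_pivot_le (phi_ltE k) pk; have := E_le k.+1; lia.
Qed.

Lemma phi_next0 j : E j.+1 = 0 -> F j = E j.
Proof. by case: j => [|[|k]] // E0; rewrite phiSS /pivot E0 ltn0 !andbF. Qed.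
End Phi.

Lemma phiK E : phi (phi E) =1 E.
Proof.
elim/ltn_ind => -[|[|k]] IH //.
rewrite phiSS pivot_phi IH //; case pk: (pivot E k); last by rewrite phiSS pk.
have /and3P[asc _ _] := pk.
by rewrite (phi_ascent asc) [phi E k.+2]phiSS pk rot3K ?phi_pivot_lt.
Qed.

(* Entries past the end read as 0, so no pivot sticks out of the sequence. *)
Definition entry n (e : n.-tuple 'I_n) (i : nat) : nat := nth 0 (map val e) i.

Lemma entry_default n (e : n.-tuple 'I_n) i : n <= i -> entry e i = 0.
Proof. by move=> n_i; rewrite /entry nth_default // size_map size_tuple. Qed.

Lemma entry_inj n (e1 e2 : n.-tuple 'I_n) : entry e1 =1 entry e2 -> e1 = e2.
Proof.
move=> eq12; apply/val_inj/(inj_map val_inj).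
by apply: (eq_from_nth (x0 := 0)) => [|i _]; [rewrite !size_map !size_tuple | apply: eq12].
Qed.

Lemma mem_Iseq n (e : n.-tuple 'I_n) : e \in Iseq n <-> forall i, entry e i <= i.
Proof.
rewrite inE /is_inv_seq size_map size_tuple eqxx /=; split => [/allP e_le i | e_le].
- case: (ltnP i n) => [i_n | n_i]; last by rewrite entry_default.
  by apply: e_le; rewrite mem_iota.
- by apply/allP => i _; apply: e_le.
Qed.

Definition phi_tuple n (e : n.-tuple 'I_n) : n.-tuple 'I_n :=
  [tuple insubd i (phi (entry e) i) | i < n].

Lemma entry_phi_tuple n (e : n.-tuple 'I_n) :
  e \in Iseq n -> entry (phi_tuple e) =1 phi (entry e).
Proof.
move=> /mem_Iseq e_le i; case: (ltnP i n) => [i_n | n_i].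
  rewrite /entry (nth_map (Ordinal i_n)) ?size_tuple //.
  rewrite -[i in nth _ _ i]/(val (Ordinal i_n)) -tnth_nth tnth_mktuple.
  by rewrite val_insubd (leq_ltn_trans (phi_le e_le i) i_n).
by rewrite phi_next0 ?entry_default // leqW.
Qed.

Lemma phi_tuple_Iseq n (e : n.-tuple 'I_n) : e \in Iseq n -> phi_tuple e \in Iseq n.
Proof.
move=> eI; apply/mem_Iseq => i; rewrite entry_phi_tuple //.
by apply: phi_le; apply/mem_Iseq.
Qed.

Lemma phi_tupleK n : {in Iseq n, cancel (@phi_tuple n) (@phi_tuple n)}.
Proof.
move=> e eI; apply: entry_inj => i.
by rewrite entry_phi_tuple ?phi_tuple_Iseq // (eq_phi (entry_phi_tuple eI)) phiK.
Qed.

Lemma Em0102_occ n (e : n.-tuple 'I_n) : Em pat0102 e = [set k : 'I_n | occ0102 (entry e) k].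
Proof.
apply/setP => k; rewrite !inE occurs_at_window // size_map size_tuple reduction_0102.
rewrite /occ0102 /pivot; case: ltnP => [_ | n_k]; first by rewrite /entry; lia.
by rewrite [entry e k.+3]entry_default // ltn0 !andbF.
Qed.

Lemma Em0112_occ n (e : n.-tuple 'I_n) : Em pat0112 e = [set k : 'I_n | occ0112 (entry e) k].
Proof.
apply/setP => k; rewrite !inE occurs_at_window // size_map size_tuple reduction_0112.
rewrite /occ0112 /pivot; case: ltnP => [_ | n_k]; first by rewrite /entry; lia.
by rewrite [entry e k.+3]entry_default // ltn0 !andbF.
Qed.

Lemma Em_phi_tuple n (e : n.-tuple 'I_n) : e \in Iseq n ->
  Em pat0102 (phi_tuple e) = Em pat0112 e /\ Em pat0112 (phi_tuple e) = Em pat0102 e.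
Proof.
move=> /entry_phi_tuple eqE; rewrite !Em0102_occ !Em0112_occ.
split; apply/setP => k; rewrite !inE.
- by rewrite -occ0102_phi /occ0102 /pivot !eqE.
- by rewrite -occ0112_phi /occ0112 /pivot !eqE.
Qed.

Lemma card_Em_swap_le n (S T : {set 'I_n}) :
  #|[set e in Iseq n | (Em pat0102 e == S) && (Em pat0112 e == T)]| <=
  #|[set e in Iseq n | (Em pat0102 e == T) && (Em pat0112 e == S)]|.
Proof.
rewrite -(card_in_imset (f := @phi_tuple n)).
  apply/subset_leq_card/subsetP => _ /imsetP[e /setIdP[eI /andP[/eqP eS /eqP eT]] ->].
  apply/setIdP; split; first exact: phi_tuple_Iseq.
  by have [-> ->] := Em_phi_tuple eI; rewrite eS eT !eqxx.
by apply: (can_in_inj (g := @phi_tuple n)) => e /setIdP[/phi_tupleK].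
Qed.

Theorem mainTheorem1 (n : nat) (S T : {set 'I_n}) :
  1 <= n ->
  #|[set e in Iseq n | (Em pat0102 e == S) && (Em pat0112 e == T)]| =
  #|[set e in Iseq n | (Em pat0102 e == T) && (Em pat0112 e == S)]|.
Proof. by move=> _; apply/eqP; rewrite eqn_leq !card_Em_swap_le. Qed.
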